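(* Let $G \neq \{1\}$ be a finitely generated, residually finite group, and let $\operatorname{rk}(G)$ denote the minimal number of elements generating $G$. Let $F = F(\mathcal{X})$ be a free group with basis $\mathcal{X}$ of cardinality $\operatorname{rk}(G)$, let $R \trianglelefteq F$ be a normal subgroup, and let $\pi_\star \colon F(\mathcal{X})/R \to G$ be an isomorphism. Suppose $R \neq \{1\}$, and let $r \in R \setminus \{1\}$ be an element of minimal length, where the length of an element of $F$ is the number of letters of the freely reduced word in $\mathcal{X} \cup \mathcal{X}^{-1}$ representing it. Then there exists a subgroup $F_1$ of finite index in $F$ with $R \subseteq F_1$ such that $r$ is a member of some basis of the (free) group $F_1$.
   Context: The rank of a finitely generated group is the minimal cardinality of a generating set. A basis of a free group is a free generating set. *)

From mathcomp Require Import all_boot all_fingroup.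
Set Implicit Arguments. Unset Strict Implicit. Unset Printing Implicit Defensive.

(* a letter (i, false) is x_i, (i, true) is x_i^{-1} *)
Definition letter (n : nat) := ('I_n * bool)%type.
Definition inv_letter n (a : letter n) : letter n := (a.1, ~~ a.2).
Definition cancels n (a b : letter n) : bool := b == inv_letter a.

Fixpoint reduced n (w : seq (letter n)) : bool :=
  match w with
  | [::] => true
  | a :: w' => reduced w' && (match w' with [::] => true | b :: _ => ~~ cancels a b end)
  end.

Definition push n (a : letter n) (w : seq (letter n)) : seq (letter n) :=
  match w with
  | [::] => [:: a]
  | b :: w' => if cancels a b then w' else a :: w
  end.

Definition reduce n (w : seq (letter n)) := foldr (@push n) [::] w.

Lemma push_reduced n (a : letter n) w : reduced w -> reduced (push a w).
Proof.
case: w => [|b w] //= Hw.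
case: ifP => Hc; first by case/andP: Hw.
by rewrite /= Hw Hc.
Qed.

Lemma reduce_reduced n (w : seq (letter n)) : reduced (reduce w).
Proof. by elim: w => [|a w IH] //=; apply: push_reduced. Qed.

Definition FG (n : nat) := {w : seq (letter n) | reduced w}.

Definition f1 n : FG n := exist _ [::] (erefl true).
Definition fmul n (u v : FG n) : FG n :=
  exist _ (reduce (proj1_sig u ++ proj1_sig v)) (reduce_reduced _).
Definition finv n (u : FG n) : FG n :=
  exist _ (reduce (rev (map (@inv_letter n) (proj1_sig u)))) (reduce_reduced _).
Definition flen n (u : FG n) : nat := size (proj1_sig u).

Definition evalF n (b : seq (FG n)) (u : FG (size b)) : FG n :=
  foldr (fun (a : letter (size b)) acc => fmul (if a.2 then finv (nth (f1 n) b a.1) else nth (f1 n) b a.1) acc)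
        (f1 n) (proj1_sig u).

Arguments evalF {n} b u.

Definition fsubgroup n (H : FG n -> Prop) : Prop :=
  H (f1 n) /\ (forall u v, H u -> H v -> H (fmul u v)) /\ (forall u, H u -> H (finv u)).

Definition fnormal n (H : FG n -> Prop) : Prop :=
  fsubgroup H /\ (forall u w, H u -> H (fmul (finv w) (fmul u w))).

Definition finite_index n (H : FG n -> Prop) : Prop :=
  exists t : seq (FG n), forall w, exists2 x, x \in t & H (fmul (finv x) w).

Definition basis_of n (H : FG n -> Prop) (b : seq (FG n)) : Prop :=
  (forall u v : FG (size b), evalF b u = evalF b v -> u = v) /\
  (forall w, H w <-> exists u : FG (size b), evalF b u = w).

Record AbsGroup := {
  gcar :> Type;
  gmul : gcar -> gcar -> gcar;
  gone : gcar;
  ginv : gcar -> gcar;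
  gmulA : forall x y z, gmul x (gmul y z) = gmul (gmul x y) z;
  gmul1 : forall x, gmul gone x = x;
  gmulV : forall x, gmul (ginv x) x = gone }.

Definition evalG (G : AbsGroup) n (g : 'I_n -> G) (u : FG n) : G :=
  foldr (fun (a : letter n) acc => gmul (if a.2 then ginv (g a.1) else g a.1) acc)
        (gone G) (proj1_sig u).

Definition generates (G : AbsGroup) (s : seq G) : Prop :=
  forall x : G, exists u : FG (size s), evalG (fun i => nth (gone G) s i) u = x.

Definition rank_eq (G : AbsGroup) (k : nat) : Prop :=
  (exists s : seq G, size s = k /\ generates s) /\
  (forall s : seq G, generates s -> k <= size s).

Definition residually_finite (G : AbsGroup) : Prop :=
  forall x : G, x <> gone G ->
    exists (gT : finGroupType) (f : G -> gT),
      (forall y z, f (gmul y z) = (f y * f z)%g) /\ f x <> 1%g.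

Definition is_hom (G : AbsGroup) n (p : FG n -> G) : Prop :=
  forall u v, p (fmul u v) = gmul (p u) (p v).

(* Since r has minimal length in R, every nonempty proper subword of r is a
   reduced word shorter than r, hence not in R, hence nontrivial in G.
   Residual finiteness yields a homomorphism f from G to a finite group Q
   keeping these finitely many elements nontrivial, and F acts on Q by
   right multiplication through f o pi.  Take F1 = stabilizer of 1: it has
   finite index and contains R = ker pi.  In the Schreier graph of this action
   the path of r is a closed cycle whose proper prefixes end at pairwise
   distinct vertices (two coinciding would make a proper subword trivial in Q),
   so a spanning tree can be chosen to contain the whole cycle except its last
   edge.  The Schreier generators of the non-tree edges form a basis of F1,
   and the generator of that last edge is r itself (up to orienting the edge). *)

From Pilot Require Import Defs.
From mathcomp Require Import all_boot all_fingroup zify.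
Set Implicit Arguments. Unset Strict Implicit. Unset Printing Implicit Defensive.

Section FreeReduction.
Variable n : nat.
Implicit Types (a b : letter n) (w x y z s : seq (letter n)).

Lemma inv_letterK a : inv_letter (inv_letter a) = a.
Proof. by case: a => i c; rewrite /inv_letter /= negbK. Qed.

Lemma reduce_id w : reduced w -> reduce w = w.
Proof.
elim: w => [|a w IH] //= /andP [Hw Hc]; rewrite IH //.
by case: w Hw Hc {IH} => [|b w] //= _ /negbTE ->.
Qed.

Lemma reduce_idem x : reduce (reduce x) = reduce x.
Proof. by rewrite reduce_id // reduce_reduced. Qed.

Lemma push_invK a w : reduced w -> push a (push (inv_letter a) w) = w.
Proof.
case: w => [|b w] /=; first by rewrite /cancels eqxx.
move=> /andP [Hw Hc]; rewrite {1}/cancels inv_letterK; case: eqP => [Eb|Hb].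
  by subst b; case: w Hw Hc => [|c w] //= _ Hc; rewrite (negbTE Hc).
by rewrite /= /cancels eqxx.
Qed.

Lemma reduce_cat x y : reduce (x ++ y) = foldr (@push n) (reduce y) x.
Proof. by rewrite /reduce foldr_cat. Qed.

Lemma foldr_push_reduce z x : reduced z ->
  foldr (@push n) z (reduce x) = foldr (@push n) z x.
Proof.
move=> Hz; have Rz y : reduced (foldr (@push n) z y).
  by elim: y => [|a y IH] //=; apply: push_reduced.
elim: x => [|a x IH] //=; rewrite -IH.
case: (reduce x) => [|b y] //=; case: ifP => // /eqP ->.
by rewrite push_invK.
Qed.

Lemma reduce_catr x y : reduce (x ++ reduce y) = reduce (x ++ y).
Proof. by rewrite !reduce_cat reduce_idem. Qed.

Lemma reduce_catl x y : reduce (reduce x ++ y) = reduce (x ++ y).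
Proof. by rewrite !reduce_cat foldr_push_reduce // reduce_reduced. Qed.

Lemma reduce_cat2 x y : reduce (reduce x ++ reduce y) = reduce (x ++ y).
Proof. by rewrite reduce_catl reduce_catr. Qed.

Definition invw w := rev (map (@inv_letter n) w).

Lemma invw_cons a w : invw (a :: w) = invw w ++ [:: inv_letter a].
Proof. by rewrite /invw /= rev_cons cats1. Qed.

Lemma invw_cat x y : invw (x ++ y) = invw y ++ invw x.
Proof. by rewrite /invw map_cat rev_cat. Qed.

Lemma invw_rcons x a : invw (rcons x a) = inv_letter a :: invw x.
Proof. by rewrite -cats1 invw_cat. Qed.

Lemma invwK : involutive invw.
Proof.
move=> w; rewrite /invw map_rev revK -map_comp.
by rewrite (@eq_map _ _ _ id) ?map_id // => a; rewrite /= inv_letterK.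
Qed.

Lemma reduce_catK s w : reduce (s ++ invw s ++ w) = reduce w.
Proof.
elim: s w => [|a s IH] w //=.
by rewrite invw_cons -catA /= IH /= push_invK // reduce_reduced.
Qed.

Lemma reduce_invw_catK s w : reduce (invw s ++ s ++ w) = reduce w.
Proof. by rewrite -{2}(invwK s) reduce_catK. Qed.

Lemma reduce_invw s : reduce (invw (reduce s)) = reduce (invw s).
Proof.
elim: s => [|a s IH] //=.
have push_invw z : reduced z ->
    reduce (invw (push a z)) = reduce (invw z ++ [:: inv_letter a]).
  case: z => [|b z] Hz //=; case: ifP => [/eqP ->|_]; last by rewrite invw_cons.
  rewrite invw_cons -catA /= inv_letterK -reduce_catr /=.
  by rewrite /cancels eqxx cats0.
by rewrite push_invw ?reduce_reduced // -reduce_catl IH reduce_catl invw_cons.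
Qed.

Lemma reduce_invwK s : reduced s -> reduce (invw (reduce (invw s))) = s.
Proof. by move=> Hs; rewrite reduce_invw invwK reduce_id. Qed.

Lemma reduced_catl x y : reduced (x ++ y) -> reduced x.
Proof.
elim: x => [|a x IH] //= /andP [H1 H2]; rewrite IH //=.
by case: x H2 {IH H1} => [|b x].
Qed.

Lemma reduced_catr x y : reduced (x ++ y) -> reduced y.
Proof. by elim: x => [|a x IH] //= /andP [H1 _]; apply: IH. Qed.

Lemma reduced_rcons x a : reduced x ->
  (forall x' b, x = rcons x' b -> ~~ cancels b a) -> reduced (rcons x a).
Proof.
elim: x => [|c x IH] //= /andP [Hx Hc] Hl.
apply/andP; split.
  by apply: IH => // x' b E; apply: (Hl (c :: x')); rewrite E.
case: x {IH Hx} Hc Hl => [|d x] //= _ Hl.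
exact: (Hl [::] c).
Qed.

End FreeReduction.

Arguments invw {n}.

Definition letF n (a : letter n) : FG n := exist _ [:: a] (erefl true).

Lemma val_finv n (x : FG n) : proj1_sig (Defs.finv x) = reduce (invw (proj1_sig x)).
Proof. by []. Qed.

Section Walks.
Variables (n m : nat) (S : Type) (step : S -> letter n -> S).
Variable emit : S -> letter n -> seq (letter m).
Hypothesis step_invK : forall v a, step (step v a) (inv_letter a) = v.
Hypothesis emit_inv : forall v a, emit (step v a) (inv_letter a) = invw (emit v a).

Fixpoint stepw v (w : seq (letter n)) : S :=
  if w is a :: w' then stepw (step v a) w' else v.

Fixpoint walk v (w : seq (letter n)) : seq (letter m) :=
  if w is a :: w' then emit v a ++ walk (step v a) w' else [::].

Lemma stepw_cat v x y : stepw v (x ++ y) = stepw (stepw v x) y.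
Proof. by elim: x v => [|a x IH] v //=. Qed.

Lemma stepw_rcons v x a : stepw v (rcons x a) = step (stepw v x) a.
Proof. by rewrite -cats1 stepw_cat. Qed.

Lemma walk_cat v x y : walk v (x ++ y) = walk v x ++ walk (stepw v x) y.
Proof. by elim: x v => [|a x IH] v //=; rewrite IH catA. Qed.

Lemma stepw_reduce v w : stepw v (reduce w) = stepw v w.
Proof.
elim: w v => [|a w IH] v //=; rewrite -IH.
by case: (reduce w) => [|b w'] //=; case: ifP => // /eqP -> /=; rewrite step_invK.
Qed.

Lemma walk_reduce v w : reduce (walk v (reduce w)) = reduce (walk v w).
Proof.
elim: w v => [|a w IH] v //=; rewrite -reduce_catr -IH reduce_catr.
case: (reduce w) => [|b w'] //=; case: ifP => // /eqP -> /=.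
by rewrite emit_inv step_invK reduce_catK.
Qed.

Lemma stepwK v s : stepw (stepw v s) (invw s) = v.
Proof.
elim: s v => [|a s IH] v //=.
by rewrite invw_cons stepw_cat IH /= step_invK.
Qed.

Lemma stepwVK v s : stepw (stepw v (invw s)) s = v.
Proof. by rewrite -{2}(invwK s) stepwK. Qed.

Lemma walk_invw v s : walk (stepw v s) (invw s) = invw (walk v s).
Proof.
elim: s v => [|a s IH] v //=.
by rewrite invw_cons walk_cat IH stepwK /= emit_inv cats0 invw_cat.
Qed.

End Walks.

Definition stabilizer n (S : Type) (step : S -> letter n -> S) (o : S) (w : FG n) :=
  stepw step o (proj1_sig w) = o.

Lemma stabilizer_subgroup n (S : Type) (step : S -> letter n -> S) o :
  (forall v a, step (step v a) (inv_letter a) = v) -> fsubgroup (stabilizer step o).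
Proof.
move=> step_invK; split; first by [].
split=> [u v Hu Hv | u Hu]; rewrite /stabilizer /= stepw_reduce //.
  by rewrite stepw_cat Hu Hv.
by rewrite -{1}Hu stepwK.
Qed.

Section SchreierBasis.
Variables (n : nat) (V : finType) (step : V -> letter n -> V) (o : V).
Hypothesis step_invK : forall v a, step (step v a) (inv_letter a) = v.
Local Notation sw := (stepw step).

(* [p] is a Schreier transversal of the orbit [vis] of [o]: a prefix-closed
   family of reduced paths from [o], one to each vertex of the orbit. *)
Variables (vis : pred V) (p : V -> seq (letter n)).
Hypothesis vis_o : vis o.
Hypothesis vis_step : forall v a, vis v -> vis (step v a).
Hypothesis p_o : p o = [::].
Hypothesis p_reduced : forall v, reduced (p v).
Hypothesis stepw_p : forall v, vis v -> sw o (p v) = v.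
Hypothesis p_rcons : forall v q a, vis v -> p v = rcons q a -> p (sw o q) = q.

Variable orient : V * 'I_n -> bool.

Lemma vis_stepw v w : vis v -> vis (sw v w).
Proof. by elim: w v => [|a w IH] v Hv //=; apply/IH/vis_step. Qed.

Definition tree_edge u a :=
  (p (step u a) == rcons (p u) a) || (p u == rcons (p (step u a)) (inv_letter a)).

Lemma tree_edge_inv u a : tree_edge (step u a) (inv_letter a) = tree_edge u a.
Proof. by rewrite /tree_edge step_invK inv_letterK orbC. Qed.

Definition path_elt v : FG n := exist _ (p v) (p_reduced v).

Definition schreier_gen (e : V * 'I_n) : FG n :=
  fmul (fmul (path_elt e.1) (letF (e.2, false))) (Defs.finv (path_elt (step e.1 (e.2, false)))).

Lemma val_schreier_gen e : proj1_sig (schreier_gen e) =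
  reduce (p e.1 ++ (e.2, false) :: invw (p (step e.1 (e.2, false)))).
Proof. by rewrite /= (reduce_cat2 (p e.1 ++ _) (invw _)) -catA. Qed.

Definition cotree_edges := [seq e <- enum {: V * 'I_n} | vis e.1 && ~~ tree_edge e.1 (e.2, false)].

Lemma mem_cotree_edges e : (e \in cotree_edges) = vis e.1 && ~~ tree_edge e.1 (e.2, false).
Proof. by rewrite mem_filter mem_enum andbT. Qed.

Definition oriented_gen e := if orient e then Defs.finv (schreier_gen e) else schreier_gen e.

Definition basis := map oriented_gen cotree_edges.

Definition edge_letter (e : V * 'I_n) : seq (letter (size basis)) :=
  if insub (index e cotree_edges) is Some j then [:: (j, orient e)] else [::].

Definition edge_word u (a : letter n) : seq (letter (size basis)) :=
  if a.2 then invw (edge_letter (step u a, a.1)) else edge_letter (u, a.1).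

Lemma edge_word_inv u a : edge_word (step u a) (inv_letter a) = invw (edge_word u a).
Proof.
case: a => i [] /=; rewrite /edge_word /=; first by rewrite invwK.
by have := step_invK u (i, false); rewrite /inv_letter /= => ->.
Qed.

Lemma edge_letter_cotree_edges e : e \in cotree_edges -> exists j : 'I_(size basis),
  val j = index e cotree_edges /\ edge_letter e = [:: (j, orient e)].
Proof.
move=> He; have Hi : index e cotree_edges < size basis by rewrite size_map index_mem.
by exists (Ordinal Hi); split => //; rewrite /edge_letter insubT.
Qed.

Lemma edge_word_tree u a : tree_edge u a -> edge_word u a = [::].
Proof.
have letter0 e : e \notin cotree_edges -> edge_letter e = [::].
  by move=> He; rewrite /edge_letter insubN // size_map memNindex // ltnn.
case: a => i [] Ht; rewrite /edge_word /= letter0 // mem_cotree_edges negb_and negbK.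
  by have := tree_edge_inv u (i, true); rewrite /inv_letter /= => ->; rewrite Ht orbT.
by rewrite Ht orbT.
Qed.

(* Reidemeister-Schreier rewriting: crossing a non-tree edge emits its basis letter. *)
Local Notation rewr := (walk step edge_word).

Lemma rewr_tree_path v : vis v -> rewr o (p v) = [::].
Proof.
suff: forall q u, vis u -> p u = q -> rewr o q = [::] by move=> H Hv; apply: H Hv _.
elim/last_ind => [|q a IH] u Hu Epu //.
have Hq : p (sw o q) = q by apply: p_rcons Epu.
rewrite -cats1 walk_cat (IH _ (vis_stepw _ vis_o) Hq) /= cats0.
apply: edge_word_tree; apply/orP; left.
by rewrite Hq -stepw_rcons -Epu stepw_p.
Qed.

Lemma rewr_invw_loop s : sw o s = o ->
  reduce (rewr o (invw s)) = reduce (invw (reduce (rewr o s))).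
Proof.
move=> Hs; rewrite reduce_invw -{1}Hs walk_invw //; exact: edge_word_inv.
Qed.

Lemma schreier_gen_loop e : e \in cotree_edges ->
  sw o (proj1_sig (schreier_gen e)) = o /\
  reduce (rewr o (proj1_sig (schreier_gen e))) = edge_letter e.
Proof.
case: e => u i He; move: (He); rewrite mem_cotree_edges => /andP [Hu _].
have Hu' := vis_step (i, false) Hu.
rewrite val_schreier_gen /=; split.
  rewrite stepw_reduce // -cat1s stepw_cat /= stepw_p //.
  by rewrite -{1}(stepw_p Hu') stepwK.
rewrite walk_reduce //; last exact: edge_word_inv.
rewrite walk_cat rewr_tree_path //= stepw_p //= -{1}(stepw_p Hu').
rewrite walk_invw //; last exact: edge_word_inv.
rewrite rewr_tree_path // cats0 /edge_word /=.
by have [j [_ ->]] := edge_letter_cotree_edges He.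
Qed.

Lemma oriented_gen_loop e (j : 'I_(size basis)) :
  e \in cotree_edges -> val j = index e cotree_edges ->
  sw o (proj1_sig (oriented_gen e)) = o /\
  reduce (rewr o (proj1_sig (oriented_gen e))) = [:: (j, false)].
Proof.
move=> He Hj; have [H1 H2] := schreier_gen_loop He.
have [j' [Hj' Hs]] := edge_letter_cotree_edges He.
have Ej : j' = j by apply: val_inj; rewrite Hj Hj'.
rewrite Hs Ej in H2; rewrite /oriented_gen; case: (orient e) H2 => H2; last by [].
rewrite val_finv; set g := proj1_sig (schreier_gen e) in H1 H2 *.
split; first by rewrite stepw_reduce // -{1}H1 stepwK.
by rewrite walk_reduce ?rewr_invw_loop ?H2 //; exact: edge_word_inv.
Qed.

Lemma nth_basis (j : 'I_(size basis)) : exists e,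
  [/\ e \in cotree_edges, index e cotree_edges = j & nth (f1 n) basis j = oriented_gen e].
Proof.
have Hj : j < size cotree_edges by rewrite -(size_map oriented_gen).
have [e0 _] : exists e0 : V * 'I_n, true by case: cotree_edges Hj => [|e0 ?] //; exists e0.
exists (nth e0 cotree_edges j); split; first exact: mem_nth.
  by rewrite index_uniq // filter_uniq // enum_uniq.
by rewrite /basis (nth_map e0).
Qed.

Definition gen_word (a : letter (size basis)) : seq (letter n) :=
  let g := proj1_sig (nth (f1 n) basis a.1) in if a.2 then invw g else g.

Lemma gen_word_inv a : gen_word (inv_letter a) = invw (gen_word a).
Proof. by case: a => j [] //=; rewrite /gen_word /= invwK. Qed.

Lemma gen_word_loop a : sw o (gen_word a) = o /\ reduce (rewr o (gen_word a)) = [:: a].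
Proof.
case: a => j s; have [e [He Hi Hn]] := nth_basis j.
have [H1 H2] := oriented_gen_loop He (esym Hi).
rewrite /gen_word /= Hn; case: s => //.
split; first by rewrite -{1}H1 stepwK.
by rewrite rewr_invw_loop ?H2.
Qed.

Local Notation expand := (walk (S:=unit) (fun _ _ => tt) (fun _ a => gen_word a) tt).

Lemma expand_cat x y : expand (x ++ y) = expand x ++ expand y.
Proof. by rewrite walk_cat; case: (stepw _ _ _). Qed.

Lemma val_evalF (u : FG (size basis)) : proj1_sig (evalF basis u) = reduce (expand (proj1_sig u)).
Proof.
rewrite /evalF; elim: (proj1_sig u) => [|a s IH] //=.
by rewrite IH reduce_catr; case: a => j [] //=; rewrite reduce_catl.
Qed.

Lemma stepw_expand s : sw o (expand s) = o.
Proof.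
elim: s => [|a s IH] //=.
by have [H1 _] := gen_word_loop a; rewrite stepw_cat H1.
Qed.

Lemma rewr_expand s : reduce (rewr o (expand s)) = reduce s.
Proof.
elim: s => [|a s IH] //=.
have [H1 H2] := gen_word_loop a.
by rewrite walk_cat -reduce_catl H2 H1 /= IH.
Qed.

Lemma gen_word_orient (j : 'I_(size basis)) (f : bool) (g : FG n) :
  nth (f1 n) basis j = (if f then Defs.finv g else g) ->
  reduce (gen_word (j, f)) = proj1_sig g /\
  reduce (gen_word (j, ~~ f)) = reduce (invw (proj1_sig g)).
Proof.
case: g => g Hg; case: f => /= Hn; rewrite /gen_word /= Hn /=.
  by rewrite (reduce_invwK Hg) reduce_idem.
by rewrite reduce_id.
Qed.

Lemma expand_edge_word v a : vis v ->
  reduce (p v ++ a :: invw (p (step v a))) = reduce (expand (edge_word v a)).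
Proof.
move=> Hv; case: (boolP (tree_edge v a)) => Ht.
  rewrite edge_word_tree //=; case/orP: Ht => /eqP ->.
    by have := reduce_catK (rcons (p v) a) [::]; rewrite invw_rcons cats0 -cats1 -catA.
  have := reduce_catK (rcons (p (step v a)) (inv_letter a)) [::].
  by rewrite invw_rcons cats0 -!cats1 -!catA /= inv_letterK.
have edge_gen e : e \in cotree_edges -> exists j : 'I_(size basis),
    edge_letter e = [:: (j, orient e)] /\ nth (f1 n) basis j = oriented_gen e.
  move=> He; have [j [Hj ->]] := edge_letter_cotree_edges He.
  exists j; split => //; have [e' [He' Hi ->]] := nth_basis j.
  by rewrite -(nth_index e' He') Hi -[nat_of_ord j]/(val j) Hj nth_index.
case: a Ht => i [] Ht.
- set v' := step v (i, true).
  have Hvv : step v' (i, false) = v by have := step_invK v (i, true); rewrite /inv_letter.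
  have He : (v', i) \in cotree_edges.
    rewrite mem_cotree_edges /= vis_step //=; have := tree_edge_inv v (i, true).
    by rewrite /inv_letter /= => ->.
  have [j [Hs Hn]] := edge_gen _ He; have [_ H2] := gen_word_orient Hn.
  rewrite /edge_word /= Hs /invw /= cats0 /inv_letter /= H2.
  by rewrite val_schreier_gen reduce_invw /= Hvv invw_cat invw_cons invwK -catA.
- have He : (v, i) \in cotree_edges by rewrite mem_cotree_edges Hv.
  have [j [Hs Hn]] := edge_gen _ He; have [H1 _] := gen_word_orient Hn.
  by rewrite /edge_word /= Hs /= cats0 H1 val_schreier_gen.
Qed.

Lemma expand_rewr s v : vis v ->
  reduce (p v ++ s) = reduce (expand (rewr v s) ++ p (sw v s)).
Proof.
elim: s v => [|a s IH] v Hv /=; first by rewrite cats0.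
set q := p (step v a).
have -> : reduce (p v ++ a :: s) = reduce ((p v ++ a :: invw q) ++ (q ++ s)).
  have -> : (p v ++ a :: invw q) ++ q ++ s = rcons (p v) a ++ invw q ++ q ++ s.
    by rewrite -cats1 -!catA.
  by rewrite -[in RHS]reduce_catr reduce_invw_catK reduce_catr -cats1 -catA.
by rewrite -reduce_cat2 expand_edge_word // IH ?vis_step // reduce_cat2 expand_cat catA.
Qed.

Definition schreier_rewrite (w : FG n) : FG (size basis) :=
  exist _ (reduce (rewr o (proj1_sig w))) (reduce_reduced _).

Lemma evalFK : cancel (evalF basis) schreier_rewrite.
Proof.
move=> u; apply: val_inj; rewrite /= val_evalF walk_reduce //; last exact: edge_word_inv.
by rewrite rewr_expand reduce_id //; case: u.
Qed.

Lemma schreier_rewriteK w : stabilizer step o w -> evalF basis (schreier_rewrite w) = w.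
Proof.
move=> Hw; apply: val_inj.
rewrite /= val_evalF walk_reduce //; [| by case | by move=> _ a; apply: gen_word_inv].
have := expand_rewr (proj1_sig w) vis_o; rewrite p_o /= Hw p_o cats0 => <-.
by rewrite reduce_id //; case: w {Hw}.
Qed.

Lemma basis_of_stabilizer : basis_of (stabilizer step o) basis.
Proof.
split; first exact: can_inj evalFK.
move=> w; split; first by move=> Hw; exists (schreier_rewrite w); apply: schreier_rewriteK.
case=> u <-; rewrite /stabilizer val_evalF stepw_reduce //; exact: stepw_expand.
Qed.

Lemma stabilizer_finite_index : finite_index (stabilizer step o).
Proof.
exists [seq Defs.finv (path_elt v) | v <- enum V] => w.
set v := sw o (proj1_sig (Defs.finv w)).
exists (Defs.finv (path_elt v)); first by apply: map_f; rewrite mem_enum.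
rewrite /stabilizer /= stepw_reduce // stepw_cat (reduce_invwK (p_reduced v)).
rewrite stepw_p; last exact: vis_stepw.
by rewrite /v /= stepw_reduce // stepwVK.
Qed.

End SchreierBasis.

Section SchreierTransversal.
Variables (n : nat) (V : finType) (step : V -> letter n -> V) (o : V).
Hypothesis step_invK : forall v a, step (step v a) (inv_letter a) = v.
Local Notation sw := (stepw step).

Variable t : seq (letter n).
Hypothesis t_reduced : reduced t.
Hypothesis t_simple : uniq [seq sw o (take k t) | k <- iota 0 (size t).+1].

(* A tree is stored as the list of its vertices, each paired with its path from [o]. *)
Local Notation tree := (seq (V * seq (letter n))).

Definition tree_inv (st : tree) :=
  [/\ uniq (map fst st),
      (forall v q, (v, q) \in st -> sw o q = v /\ reduced q),
      (forall v q a, (v, rcons q a) \in st -> (sw o q, q) \in st) &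
      (o, [::]) \in st].

Definition lookup (st : tree) v := nth [::] (map snd st) (index v (map fst st)).

Definition grow (st : tree) : tree :=
  if [pick x : V * letter n | (x.1 \in map fst st) && (step x.1 x.2 \notin map fst st)]
    is Some x
  then rcons st (step x.1 x.2, rcons (lookup st x.1) x.2) else st.

Definition path_tree : tree := [seq (sw o (take k t), take k t) | k <- iota 0 (size t).+1].

Definition spanning_tree := iter #|V| grow path_tree.

Definition tree_vertex : pred V := [pred v | v \in map fst spanning_tree].

Definition tree_path := lookup spanning_tree.

Lemma lookup_in st v q : uniq (map fst st) -> (v, q) \in st -> lookup st v = q.
Proof.
elim: st => [|[v' q'] st IH] //= /andP [Hn Hu]; rewrite inE => /orP [/eqP [-> ->]|H].
  by rewrite /lookup /= eqxx.
rewrite /lookup /=; case: eqP => [E|_]; last exact: IH.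
by subst v'; case/negP: Hn; apply/mapP; exists (v, q).
Qed.

Lemma tree_inv_path : tree_inv path_tree.
Proof.
split.
- by rewrite -map_comp.
- move=> v q /mapP [k Hk [-> ->]]; split => //.
  by move: t_reduced; rewrite -{1}(cat_take_drop k t) => /reduced_catl.
- move=> v0 q a /mapP [[|k] Hk [_ Eq]]; first by rewrite take0 in Eq; case: q Eq.
  have Hkt : k < size t by rewrite mem_iota in Hk; lia.
  rewrite (take_nth a Hkt) in Eq.
  case: (rcons_inj Eq) => -> _; apply/mapP; exists k => //; rewrite mem_iota; lia.
- by apply/mapP; exists 0; rewrite ?mem_iota ?take0.
Qed.

Lemma grow_inv st : tree_inv st -> tree_inv (grow st).
Proof.
move=> [Hu Hq Hp Ho]; rewrite /grow; case: pickP => [[v a] /= /andP [Hv Hn]|_]; last by split.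
have [q Hvq] : exists q, (v, q) \in st by case/mapP: Hv => [[v' q] H /= ->]; exists q.
rewrite (lookup_in Hu Hvq); have [Hsq Hrq] := Hq _ _ Hvq.
split.
- by rewrite map_rcons rcons_uniq Hn Hu.
- move=> w q'; rewrite mem_rcons inE => /orP [/eqP [-> ->]|H]; last exact: Hq.
  split; first by rewrite stepw_rcons Hsq.
  apply: reduced_rcons => // x' c Ex; apply/negP => /eqP Ec.
  case/negP: Hn; rewrite Ex in Hvq Hsq.
  have := Hp _ _ _ Hvq; rewrite -Hsq stepw_rcons Ec step_invK => H.
  by apply/mapP; exists (sw o x', x').
- move=> w q' c; rewrite !mem_rcons !inE => /orP [/eqP [_ /rcons_inj [-> _]]|H].
    by rewrite Hsq Hvq orbT.
  by rewrite (Hp _ _ _ H) orbT.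
- by rewrite mem_rcons inE Ho orbT.
Qed.

Lemma spanning_tree_inv : tree_inv spanning_tree.
Proof.
by rewrite /spanning_tree; elim: #|V| => [|k IH] /=; [exact: tree_inv_path | exact: grow_inv].
Qed.

Lemma path_tree_sub x : x \in path_tree -> x \in spanning_tree.
Proof.
rewrite /spanning_tree; elim: #|V| => [|k IH] //= /IH.
by rewrite /grow; case: pickP => // y _; rewrite mem_rcons inE => ->; rewrite orbT.
Qed.

(* Each round of [grow] either adds a new vertex or finds the tree closed under steps;
   since there are at most #|V| vertices, #|V| rounds suffice. *)
Lemma tree_vertex_step v a : tree_vertex v -> tree_vertex (step v a).
Proof.
pose step_closed (st : tree) := forall v a, v \in map fst st -> step v a \in map fst st.
have grow_step st : grow st = st /\ step_closed st \/ size (grow st) = (size st).+1.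
  rewrite /grow; case: pickP => [x _|H]; first by right; rewrite size_rcons.
  by left; split => // u b Hu; move: (H (u, b)); rewrite /= Hu => /negbFE.
have [|Hs] : step_closed spanning_tree \/ size path_tree + #|V| <= size spanning_tree.
- rewrite /spanning_tree; elim: #|V| => [|k [Hc|Hs]]; first by right; rewrite addn0.
    by left; rewrite /= /grow; case: pickP => // [[u b]] /= /andP [/Hc ->].
  rewrite /=; case: (grow_step (iter k grow path_tree)) => [[-> Hc]|Hs']; first by left.
  by right; rewrite Hs' addnS ltnS.
- exact.
have [Hu _ _ _] := spanning_tree_inv.
have : #|map fst spanning_tree| <= #|V| by apply: max_card.
rewrite (card_uniqP Hu) size_map.
by rewrite size_map size_iota in Hs; lia.
Qed.

Lemma tree_path_in v : tree_vertex v -> (v, tree_path v) \in spanning_tree.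
Proof.
have [Hu _ _ _] := spanning_tree_inv.
by case/mapP => [[v' q] H /= ->]; rewrite /tree_path (lookup_in Hu H).
Qed.

Lemma tree_vertex_o : tree_vertex o.
Proof. by have [_ _ _ Ho] := spanning_tree_inv; apply/mapP; exists (o, [::]). Qed.

Lemma tree_path_o : tree_path o = [::].
Proof. by have [Hu _ _ Ho] := spanning_tree_inv; apply: lookup_in. Qed.

Lemma tree_path_reduced v : reduced (tree_path v).
Proof.
have [Hu Hq _ _] := spanning_tree_inv.
case: (boolP (tree_vertex v)) => H; first by case: (Hq _ _ (tree_path_in H)).
by rewrite /tree_path /lookup memNindex // nth_default // !size_map.
Qed.

Lemma stepw_tree_path v : tree_vertex v -> sw o (tree_path v) = v.
Proof. by have [_ Hq _ _] := spanning_tree_inv; move/tree_path_in/Hq => []. Qed.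

Lemma tree_path_rcons v q a :
  tree_vertex v -> tree_path v = rcons q a -> tree_path (sw o q) = q.
Proof.
move=> /tree_path_in + Ev; rewrite Ev; have [Hu _ Hp _] := spanning_tree_inv.
by move/Hp/(lookup_in Hu).
Qed.

Lemma take_in_spanning_tree k : k <= size t -> (sw o (take k t), take k t) \in spanning_tree.
Proof. by move=> Hk; apply/path_tree_sub/mapP; exists k => //; rewrite mem_iota. Qed.

Lemma tree_path_take k : k <= size t -> tree_path (sw o (take k t)) = take k t.
Proof.
have [Hu _ _ _] := spanning_tree_inv.
by move=> /take_in_spanning_tree; apply: lookup_in.
Qed.

Lemma tree_vertex_take k : k <= size t -> tree_vertex (sw o (take k t)).
Proof. by move=> /take_in_spanning_tree Hk; apply/mapP; exists (sw o (take k t), take k t). Qed.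

End SchreierTransversal.

Lemma finite_index_stabilizer n (V : finType) (step : V -> letter n -> V) o :
  (forall v a, step (step v a) (inv_letter a) = v) -> finite_index (stabilizer step o).
Proof.
move=> step_invK; have nil_reduced : reduced (@nil (letter n)) by [].
have nil_simple : uniq [seq stepw step o (take k [::]) | k <- iota 0 1] by [].
apply: (stabilizer_finite_index step_invK (tree_vertex_o step_invK nil_reduced nil_simple)).
- exact: tree_vertex_step nil_reduced nil_simple.
- exact: tree_path_reduced nil_reduced nil_simple.
- exact: stepw_tree_path nil_reduced nil_simple.
Qed.

Section SimpleCycle.
Variables (n : nat) (V : finType) (step : V -> letter n -> V) (o : V).
Hypothesis step_invK : forall v a, step (step v a) (inv_letter a) = v.
Local Notation sw := (stepw step).

Variables (t : seq (letter n)) (a0 : letter n).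
Hypothesis cycle_reduced : reduced (rcons t a0).
Hypothesis cycle_closed : sw o (rcons t a0) = o.
Hypothesis t_simple : uniq [seq sw o (take k t) | k <- iota 0 (size t).+1].

Let t_reduced : reduced t.
Proof. by move: cycle_reduced; rewrite -cats1 => /reduced_catl. Qed.

Local Notation vis := (tree_vertex step o t).
Local Notation p := (tree_path step o t).
Local Notation p_reduced := (tree_path_reduced step_invK t_reduced t_simple).

(* Edges are named by their positive letter, so the last edge of the cycle is
   crossed backwards when [a0] is an inverse letter; [cycle_orient] then
   inverts its Schreier generator. *)
Definition cycle_edge : V * 'I_n := (if a0.2 then o else sw o t, a0.1).
Definition cycle_orient e := (e == cycle_edge) && a0.2.

Lemma step_cycle_edge : step cycle_edge.1 (a0.1, false) = if a0.2 then sw o t else o.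
Proof.
have Hc : step (sw o t) a0 = o by rewrite -stepw_rcons.
rewrite /cycle_edge; case: a0 Hc => i [] //= Hc.
by rewrite -{1}Hc (step_invK _ (i, true)).
Qed.

Lemma p_t : p (sw o t) = t.
Proof. by have := tree_path_take step_invK t_reduced t_simple (leqnn _); rewrite take_size. Qed.

Lemma vis_t : vis (sw o t).
Proof. by have := tree_vertex_take step o (leqnn (size t)); rewrite take_size. Qed.

Lemma cycle_edge_cotree : cycle_edge \in cotree_edges step vis p.
Proof.
have p_o := tree_path_o step_invK t_reduced t_simple.
have t_inv : t != [:: inv_letter a0].
  by apply: contraTneq cycle_reduced => ->; rewrite /= /cancels inv_letterK eqxx.
rewrite mem_cotree_edges /tree_edge step_cycle_edge /cycle_edge.
have nil_rcons x : ([::] == rcons t x) = false by case: t {t_inv}.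
case: a0 t_inv => i [] t_inv /=; rewrite p_t p_o /= nil_rcons ?orbF ?orFb.
  by rewrite tree_vertex_o.
by rewrite vis_t.
Qed.

Lemma val_cycle_gen :
  proj1_sig (oriented_gen step p_reduced cycle_orient cycle_edge) = rcons t a0.
Proof.
have p_o := tree_path_o step_invK t_reduced t_simple.
have E := step_cycle_edge.
rewrite /oriented_gen /cycle_orient eqxx andTb; case: ifP => Ha.
  have a0E : inv_letter (a0.1, false) = a0 by case: a0 Ha => i [].
  rewrite val_finv val_schreier_gen E Ha /cycle_edge Ha p_t p_o cat0s.
  by rewrite reduce_invw invw_cons invwK a0E cats1 reduce_id.
have a0E : (a0.1, false) = a0 by case: a0 Ha => i [].
rewrite val_schreier_gen E Ha /cycle_edge Ha p_t p_o a0E.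
by rewrite (_ : invw [::] = [::]) // cats1 reduce_id.
Qed.

Lemma rcons_cycle_in_basis :
  exists2 b, basis_of (stabilizer step o) b & exist _ (rcons t a0) cycle_reduced \in b.
Proof.
exists (basis step vis p_reduced cycle_orient).
  apply: basis_of_stabilizer => //.
  - exact: tree_vertex_o.
  - exact: tree_vertex_step.
  - exact: tree_path_o.
  - exact: stepw_tree_path.
  - exact: tree_path_rcons.
rewrite (_ : exist _ _ _ = oriented_gen step p_reduced cycle_orient cycle_edge).
  exact/map_f/cycle_edge_cotree.
by apply: val_inj; rewrite /= val_cycle_gen.
Qed.

End SimpleCycle.

Theorem simple_cycle_in_basis n (V : finType) (step : V -> letter n -> V) o (r : FG n) :
  (forall v a, step (step v a) (inv_letter a) = v) ->
  stabilizer step o r -> r <> f1 n ->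
  uniq [seq stepw step o (take k (proj1_sig r)) | k <- iota 0 (size (proj1_sig r))] ->
  exists2 b, basis_of (stabilizer step o) b & r \in b.
Proof.
case: r => w w_red step_invK /= closed r_nontriv simple.
case/lastP: w w_red closed r_nontriv simple => [|t a0] red closed r_nontriv simple.
  by case: r_nontriv; apply: val_inj.
apply: (rcons_cycle_in_basis step_invK red closed).
rewrite size_rcons in simple; congr (uniq _): simple; apply/eq_in_map => k.
by rewrite mem_iota => /andP [_ Hk]; rewrite -cats1 takel_cat.
Qed.

Lemma gmul_idem (G : AbsGroup) (y : G) : gmul y y = y -> y = gone G.
Proof. by move=> Hy; rewrite -(gmulV y) -{3}Hy gmulA gmulV gmul1. Qed.

Lemma residually_finite_family (G : AbsGroup) (I : finType) (x : I -> G) :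
  residually_finite G -> (forall i, x i <> gone G) ->
  exists (gT : finGroupType) (f : G -> gT),
    (forall y z, f (gmul y z) = (f y * f z)%g) /\ (forall i, f (x i) <> 1%g).
Proof.
move=> Hrf Hx.
suff [gT [f [f_hom f_sep]]] : exists (gT : finGroupType) (f : G -> gT),
    (forall y z, f (gmul y z) = (f y * f z)%g) /\ (forall i, i \in enum I -> f (x i) <> 1%g).
  by exists gT, f; split=> // i; apply: f_sep; rewrite mem_enum.
elim: (enum I) => [|i s [gT [f [f_hom f_sep]]]].
  by exists {perm unit}, (fun _ => 1%g); split => // y z; rewrite mulg1.
have [hT [h [h_hom hx]]] := Hrf (x i) (Hx i).
exists (gT * hT)%type, (fun y => (f y, h y)); split => [y z | j].
  by rewrite f_hom h_hom.
by rewrite inE => /orP [/eqP -> [] _ //|/f_sep fx [] //].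
Qed.

Section WordValues.
Variables (G : AbsGroup) (n : nat) (pi : FG n -> G).
Hypothesis pi_hom : is_hom pi.

Definition word_value (s : seq (letter n)) : G :=
  foldr (fun a g => gmul (pi (letF a)) g) (gone G) s.

Lemma pi_f1 : pi (f1 n) = gone G.
Proof. by apply: gmul_idem; rewrite -pi_hom; congr pi; apply: val_inj. Qed.

Lemma pi_word_value (w : FG n) : pi w = word_value (proj1_sig w).
Proof.
case: w => s; elim: s => [|a s IH] Hs /=; first by rewrite -pi_f1; congr pi; apply: val_inj.
have Hs' : reduced s by case/andP: Hs.
rewrite -(IH Hs') -pi_hom; congr pi; apply: val_inj => /=.
by rewrite -[push _ _]/(reduce (a :: s)) reduce_id.
Qed.

Lemma word_value_cat x y : word_value (x ++ y) = gmul (word_value x) (word_value y).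
Proof. by elim: x => [|a x IH] /=; rewrite ?gmul1 // IH gmulA. Qed.

End WordValues.

Section FiniteQuotientAction.
Variables (G : AbsGroup) (n : nat) (pi : FG n -> G) (gT : finGroupType) (f : G -> gT).
Hypothesis pi_hom : is_hom pi.
Hypothesis f_hom : forall y z, f (gmul y z) = (f y * f z)%g.

Definition quotient_step (v : gT) (a : letter n) : gT := (v * f (pi (letF a)))%g.

Lemma f_gone : f (gone G) = 1%g.
Proof. by apply: (@mulgI _ (f (gone G))); rewrite -f_hom gmul1 mulg1. Qed.

Lemma quotient_step_invK v a : quotient_step (quotient_step v a) (inv_letter a) = v.
Proof.
rewrite /quotient_step -mulgA -f_hom -pi_hom.
have -> : fmul (letF a) (letF (inv_letter a)) = f1 n by apply: val_inj; rewrite /= /cancels eqxx.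
by rewrite pi_f1 // f_gone mulg1.
Qed.

Lemma stepw_quotient_step v s : stepw quotient_step v s = (v * f (word_value pi s))%g.
Proof.
elim: s v => [|a s IH] v /=; first by rewrite f_gone mulg1.
by rewrite IH /quotient_step f_hom mulgA.
Qed.

Lemma stabilizer_quotient_step w : stabilizer quotient_step 1%g w <-> f (pi w) = 1%g.
Proof. by rewrite /stabilizer stepw_quotient_step mul1g pi_word_value. Qed.

End FiniteQuotientAction.

Section MinimalRelator.
Variables (G : AbsGroup) (n : nat) (pi : FG n -> G) (R : FG n -> Prop) (r : FG n).
Hypothesis pi_hom : is_hom pi.
Hypothesis pi_ker : forall w, pi w = gone G <-> R w.
Hypothesis r_min : forall s, R s -> s <> f1 n -> flen r <= flen s.
Local Notation L := (size (proj1_sig r)).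

Definition subword_index := {km : 'I_L * 'I_L | km.1 < km.2}.

Definition proper_subword (km : subword_index) : seq (letter n) :=
  drop (val km).1 (take (val km).2 (proj1_sig r)).

Lemma proper_subword_nontrivial km : word_value pi (proper_subword km) <> gone G.
Proof.
case: km => [[k m] /= Hkm]; rewrite /proper_subword /=.
set d := drop k (take m (proj1_sig r)).
have Hd : reduced d.
  have := proj2_sig r; rewrite -(cat_take_drop m (proj1_sig r)) => /reduced_catl.
  by rewrite -(cat_take_drop k (take m _)) => /reduced_catr.
have Hsz : size d = m - k by rewrite size_drop size_takel // ltnW.
move=> Hg; have HR : R (exist _ d Hd) by apply/pi_ker; rewrite pi_word_value.
have Hne : exist _ d Hd <> f1 n.
  move/(congr1 (fun w => size (proj1_sig w))); rewrite /= Hsz => /eqP.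
  by rewrite subn_eq0 leqNgt Hkm.
have : flen r <= size d := r_min HR Hne.
rewrite Hsz => /leq_trans/(_ (leq_subr k m)).
by rewrite leqNgt ltn_ord.
Qed.

Variables (gT : finGroupType) (f : G -> gT).
Hypothesis f_hom : forall y z, f (gmul y z) = (f y * f z)%g.
Hypothesis f_sep : forall km, f (word_value pi (proper_subword km)) <> 1%g.

Lemma prefix_values_neq (k m : 'I_L) : k < m ->
  f (word_value pi (take k (proj1_sig r))) <> f (word_value pi (take m (proj1_sig r))).
Proof.
move=> Hkm E.
pose km : subword_index := exist _ (k, m) Hkm.
apply: (@f_sep km).
have Em : take m (proj1_sig r) = take k (proj1_sig r) ++ proper_subword km.
  by rewrite -{1}(cat_take_drop k (take m _)) take_takel // ltnW.
rewrite Em word_value_cat f_hom in E.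
by apply: (mulgI (f (word_value pi (take k (proj1_sig r))))); rewrite mulg1 -E.
Qed.

Lemma prefixes_simple :
  uniq [seq stepw (quotient_step pi f) 1%g (take k (proj1_sig r)) | k <- iota 0 L].
Proof.
rewrite map_inj_in_uniq ?iota_uniq // => k m; rewrite !mem_iota /= => Hk Hm.
rewrite !(stepw_quotient_step pi f_hom) !mul1g.
case: (ltngtP k m) => // [Hkm|Hkm] E; exfalso.
  exact: (prefix_values_neq (k := Ordinal Hk) (m := Ordinal Hm) Hkm E).
exact: (prefix_values_neq (k := Ordinal Hm) (m := Ordinal Hk) Hkm (esym E)).
Qed.

End MinimalRelator.

Theorem lemma2 (G : AbsGroup) (n : nat)
  (HG1 : exists x : G, x <> gone G)
  (Hrf : residually_finite G)
  (Hrk : rank_eq G n)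
  (R : FG n -> Prop) (HR : fnormal R)
  (pi : FG n -> G) (Hpi : is_hom pi)
  (Hsurj : forall x : G, exists w, pi w = x)
  (Hker : forall w, pi w = gone G <-> R w)
  (HR1 : exists w, R w /\ w <> f1 n)
  (r : FG n) (Hr : R r) (Hr1 : r <> f1 n)
  (Hmin : forall s, R s -> s <> f1 n -> flen r <= flen s) :
  exists F1 : FG n -> Prop,
    [/\ fsubgroup F1, finite_index F1, (forall w, R w -> F1 w) &
        exists2 b : seq (FG n), basis_of F1 b & r \in b].
Proof.
have [gT [f [f_hom f_sep]]] :=
  residually_finite_family Hrf (proper_subword_nontrivial Hpi Hker Hmin).
have step_invK := quotient_step_invK Hpi f_hom.
have R_stab w : R w -> stabilizer (quotient_step pi f) 1%g w.
  by move/Hker => Hw; apply/(stabilizer_quotient_step Hpi f_hom); rewrite Hw (f_gone f_hom).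
have [b Hb rb] := simple_cycle_in_basis step_invK (R_stab r Hr) Hr1 (prefixes_simple f_hom f_sep).
exists (stabilizer (quotient_step pi f) 1%g); split => //.
- exact: stabilizer_subgroup.
- exact: finite_index_stabilizer.
- by exists b.
Qed.
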